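(* Let $\mathcal{N}$ be a finite-dimensional 2-step nilpotent Lie algebra over $\mathbb{R}$. Let $\mathcal{Z}$ be either $[\mathcal{N},\mathcal{N}]$ or the center $\mathfrak{z}(\mathcal{N})$, and let $\mathcal{V}$ be a subspace with $\mathcal{N}=\mathcal{V}\oplus\mathcal{Z}$. Let $G$ be the group of Lie ring automorphisms of $\mathcal{N}$, $H=\{f\in G: f(x)-x\in\mathcal{Z}\text{ for all }x\in\mathcal{N}\}$ and $K=\{f\in G: f(\mathcal{V})=\mathcal{V}\}$. Then $H$ is a normal subgroup of $G$, $K$ is a subgroup of $G$, and $G=HK$. If $\mathcal{Z}=[\mathcal{N},\mathcal{N}]$, then moreover $H\cap K=\{\mathrm{id}\}$, so $G\cong H\rtimes K$.
   Context: A Lie ring automorphism of a real Lie algebra is a bijective additive map preserving the Lie bracket (not necessarily $\mathbb{R}$-linear). *)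

From HB Require Import structures.
From mathcomp Require Import all_boot all_order all_algebra.
From mathcomp Require Import reals.
Set Implicit Arguments. Unset Strict Implicit. Unset Printing Implicit Defensive.
Import Order.TTheory GRing.Theory Num.Theory.
Local Open Scope ring_scope.

Section LieDefs.
Variables (R : realType) (V : vectType R).

Definition is_lie_bracket (b : V -> V -> V) : Prop :=
  [/\ (forall (a : R) x y z, b (a *: x + y) z = a *: b x z + b y z),
      (forall (a : R) x y z, b x (a *: y + z) = a *: b x y + b x z),
      (forall x, b x x = 0) &
      (forall x y z, b x (b y z) + b y (b z x) + b z (b x y) = 0)].

Definition two_step_nilpotent (b : V -> V -> V) : Prop :=
  (forall x y z, b (b x y) z = 0) /\ (exists x y, b x y <> 0).

Definition is_derived_algebra (b : V -> V -> V) (Z : {vspace V}) : Prop :=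
  forall z, z \in Z <->
    exists n (xs ys : 'I_n -> V), z = \sum_(i < n) b (xs i) (ys i).

Definition is_center (b : V -> V -> V) (Z : {vspace V}) : Prop :=
  forall z, z \in Z <-> (forall x, b z x = 0).

(* Lie ring automorphism: bijective additive map preserving the bracket
   (not necessarily R-linear) *)
Definition lie_ring_aut (b : V -> V -> V) (f : V -> V) : Prop :=
  [/\ (forall x y, f (x + y) = f x + f y), bijective f &
      (forall x y, f (b x y) = b (f x) (f y))].

(* set-theoretic image equality f(U) = U, for a (merely additive) map f *)
Definition maps_onto_self (f : V -> V) (U : {vspace V}) : Prop :=
  (forall u, u \in U -> f u \in U) /\
  (forall w, w \in U -> exists2 u, u \in U & f u = w).

End LieDefs.

Definition subgroup_of (T : Type) (G P : (T -> T) -> Prop) : Prop :=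
  [/\ (forall f, P f -> G f), P id,
      (forall f g, P f -> P g -> P (f \o g)) &
      (forall f g, P f -> G g -> cancel f g -> P g)].

Definition normal_subgroup_of (T : Type) (G P : (T -> T) -> Prop) : Prop :=
  subgroup_of G P /\
  (forall f g h, G f -> G g -> cancel f g -> P h -> P (f \o h \o g)).

From HB Require Import structures.
From mathcomp Require Import all_boot all_order all_algebra.
From mathcomp Require Import reals.
Set Implicit Arguments. Unset Strict Implicit. Unset Printing Implicit Defensive.
Import GRing.Theory Num.Theory.
Local Open Scope ring_scope.

(* Every automorphism f preserves Z, which is central and contains all
   brackets.  Splitting N = V + Z with the projections pV, pZ, the map
   k := pV o f o pV + f o pZ is an automorphism preserving V, it differs from
   f only by values in Z, and f |-> k is multiplicative; hence f o k^-1 lies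
   in H and f = (f o k^-1) o k.  When Z = [N,N], an f in H and K fixes V
   (since f v - v lies in V :&: Z = 0) and every bracket (since Z is
   central), hence all of N. *)

Section LieRingAut.
Variables (R : realType) (N : vectType R) (b : N -> N -> N).

Section Bracket.
Hypothesis hb : is_lie_bracket b.

Lemma lie_bracketDl x y z : b (x + y) z = b x z + b y z.
Proof. by have [hl _ _ _] := hb; rewrite -[x]scale1r hl !scale1r. Qed.

Lemma lie_bracketDr x y z : b x (y + z) = b x y + b x z.
Proof. by have [_ hr _ _] := hb; rewrite -[y]scale1r hr !scale1r. Qed.

Lemma lie_bracket0l y : b 0 y = 0.
Proof. by apply: (addrI (b 0 y)); rewrite -lie_bracketDl !addr0. Qed.

Lemma lie_bracket_skew x y : b x y = - b y x.
Proof.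
have [_ _ halt _] := hb; apply/eqP; rewrite -subr_eq0 opprK.
by have := halt (x + y); rewrite lie_bracketDl !lie_bracketDr !halt add0r addr0 => ->.
Qed.

End Bracket.

Section Automorphism.
Variable f : N -> N.
Hypothesis hf : lie_ring_aut b f.

Lemma lie_autD x y : f (x + y) = f x + f y. Proof. by case: hf. Qed.

Lemma lie_aut0 : f 0 = 0.
Proof. by apply: (addrI (f 0)); rewrite -lie_autD !addr0. Qed.

Lemma lie_autN x : f (- x) = - f x.
Proof. by apply: (addrI (f x)); rewrite -lie_autD !subrr lie_aut0. Qed.

Lemma lie_autB x y : f (x - y) = f x - f y.
Proof. by rewrite lie_autD lie_autN. Qed.

Lemma lie_aut_sum I r (P : pred I) (F : I -> N) :
  f (\sum_(i <- r | P i) F i) = \sum_(i <- r | P i) f (F i).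
Proof. exact: (big_morph f lie_autD lie_aut0). Qed.

Lemma lie_aut_bracket x y : f (b x y) = b (f x) (f y). Proof. by case: hf. Qed.

End Automorphism.

Lemma lie_aut_id : lie_ring_aut b id.
Proof. by split=> //; exists id. Qed.

Lemma lie_aut_comp f g :
  lie_ring_aut b f -> lie_ring_aut b g -> lie_ring_aut b (f \o g).
Proof.
move=> hf hg; split=> [x y|| x y] /=.
- by rewrite (lie_autD hg) (lie_autD hf).
- by case: hf => _ bf _; case: hg => _ bg _; apply: bij_comp.
- by rewrite (lie_aut_bracket hg) (lie_aut_bracket hf).
Qed.

Lemma lie_aut_inv f g :
  lie_ring_aut b f -> cancel f g -> lie_ring_aut b g /\ cancel g f.
Proof.
move=> hf fK; have [_ [g' fK' K'f] _] := hf.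
have gK : cancel g f by move=> x; rewrite -[x]K'f fK.
have f_inj : injective f := can_inj fK.
split=> //; split=> [x y||x y]; last 2 first.
- by exists f.
- by apply: f_inj; rewrite (lie_aut_bracket hf) !gK.
by apply: f_inj; rewrite (lie_autD hf) !gK.
Qed.

Definition central_subspace (Z : {vspace N}) :=
  forall z x, z \in Z -> b z x = 0.

Definition contains_brackets (Z : {vspace N}) := forall x y, b x y \in Z.

Definition characteristic (Z : {vspace N}) :=
  forall f z, lie_ring_aut b f -> z \in Z -> f z \in Z.

Section DerivedAndCenter.
Variable Z : {vspace N}.

Lemma derived_algebra_brackets : is_derived_algebra b Z -> contains_brackets Z.
Proof.
by move=> hZ x y; apply/hZ; exists 1%N, (fun=> x), (fun=> y); rewrite big_ord1.
Qed.

Lemma derived_algebra_central :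
  is_lie_bracket b -> (forall x y z, b (b x y) z = 0) ->
  is_derived_algebra b Z -> central_subspace Z.
Proof.
move=> hb hnil hZ z x /hZ [n [xs [ys ->]]].
rewrite (big_morph (b^~ x) (fun u v => lie_bracketDl hb u v x) (lie_bracket0l hb x)).
by apply: big1 => i _; apply: hnil.
Qed.

Lemma derived_algebra_characteristic :
  is_derived_algebra b Z -> characteristic Z.
Proof.
move=> hZ f z hf /hZ [n [xs [ys ->]]]; apply/hZ.
exists n, (f \o xs), (f \o ys); rewrite (lie_aut_sum hf).
by apply: eq_bigr => i _; rewrite (lie_aut_bracket hf).
Qed.

Lemma center_central : is_center b Z -> central_subspace Z.
Proof. by move=> hZ z x /hZ; apply. Qed.

Lemma center_brackets :
  (forall x y z, b (b x y) z = 0) -> is_center b Z -> contains_brackets Z.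
Proof. by move=> hnil hZ x y; apply/hZ; apply: hnil. Qed.

Lemma center_characteristic : is_center b Z -> characteristic Z.
Proof.
move=> hZ f z hf /hZ zC; apply/hZ => x; have [_ [g _ gK] _] := hf.
by rewrite -[x]gK -(lie_aut_bracket hf) zC (lie_aut0 hf).
Qed.

End DerivedAndCenter.

Lemma central_bracketr (Z : {vspace N}) x z :
  is_lie_bracket b -> central_subspace Z -> z \in Z -> b x z = 0.
Proof. by move=> hb hZ hz; rewrite lie_bracket_skew // hZ ?oppr0. Qed.

Lemma central_bracket_eq (Z : {vspace N}) x x' y y' :
  is_lie_bracket b -> central_subspace Z ->
  x' - x \in Z -> y' - y \in Z -> b x' y' = b x y.
Proof.
move=> hb hZ hx hy; rewrite -(subrK x x') -(subrK y y').
move: (x' - x) (y' - y) hx hy => u v hu hv.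
rewrite lie_bracketDl // !lie_bracketDr // !(hZ u) // (central_bracketr _ hb hZ hv).
by rewrite !add0r.
Qed.

Lemma stabilizer_subgroup (U : {vspace N}) :
  subgroup_of (lie_ring_aut b) (fun f => lie_ring_aut b f /\ maps_onto_self f U).
Proof.
split=> [f []//|||].
- by split; [exact: lie_aut_id | split=> [u|u] hu //; exists u].
- move=> f g [hf [fU Uf]] [hg [gU Ug]]; split; first exact: lie_aut_comp.
  split=> [u hu|w hw]; first by apply/fU/gU.
  have [u hu <-] := Uf w hw; have [v hv <-] := Ug u hu.
  by exists v.
- move=> f g [hf [fU Uf]] hg fK; split=> //; split=> [w hw|u hu].
    by have [u hu <-] := Uf w hw; rewrite fK.
  by exists (f u); [exact: fU | exact: fK].
Qed.

Lemma trivial_mod_normal_subgroup (Z : {vspace N}) :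
  characteristic Z ->
  normal_subgroup_of (lie_ring_aut b)
    (fun f => lie_ring_aut b f /\ forall x, f x - x \in Z).
Proof.
move=> hZ; split; first split=> [f []//|||].
- by split=> [|x]; [exact: lie_aut_id | rewrite subrr mem0v].
- move=> f g [hf fZ] [hg gZ]; split=> [|x /=]; first exact: lie_aut_comp.
  by rewrite -(subrKA (g x)) memvD.
- move=> f g [hf fZ] hg fK; split=> // x; have [_ gK] := lie_aut_inv hf fK.
  by rewrite -opprB -{1}[x]gK memvN.
move=> f g h hf hg fK [hh hZh]; split=> [|x /=].
  exact: lie_aut_comp (lie_aut_comp hf hh) hg.
have [_ gK] := lie_aut_inv hf fK.
by rewrite -{2}[x]gK -(lie_autB hf); apply: hZ.
Qed.

Section Decomposition.
Variables (Vs Zs : {vspace N}).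
Hypotheses (hb : is_lie_bracket b) (Zcentral : central_subspace Zs)
  (Zbrackets : contains_brackets Zs) (Zchar : characteristic Zs)
  (VZfull : (Vs + Zs)%VS = fullv) (VZcap : (Vs :&: Zs)%VS = 0%VS).

Local Notation pV := (daddv_pi Vs Zs).
Local Notation pZ := (daddv_pi Zs Vs).

Lemma projVZ x : pV x + pZ x = x.
Proof. by rewrite daddv_pi_add // VZfull memvf. Qed.

Lemma memVZ_eq0 u : u \in Vs -> u \in Zs -> u = 0.
Proof. by move=> hV hZ; apply/eqP; rewrite -memv0 -VZcap memv_cap hV. Qed.

Lemma projV_id v : v \in Vs -> pV v = v.
Proof. exact: daddv_pi_id. Qed.

Lemma projZ_id z : z \in Zs -> pZ z = z.
Proof. by apply: daddv_pi_id; rewrite capvC. Qed.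

Lemma projV_Z z : z \in Zs -> pV z = 0.
Proof.
move=> hz; have := projVZ z; rewrite projZ_id //.
by move/(canRL (addrK z)); rewrite subrr.
Qed.

Lemma projZ_V v : v \in Vs -> pZ v = 0.
Proof.
move=> hv; have := projVZ v; rewrite projV_id //.
by move/(canRL (addKr v)); rewrite addNr.
Qed.

Lemma projV_VZ v z : v \in Vs -> z \in Zs -> pV (v + z) = v.
Proof. by move=> hv hz; rewrite linearD /= projV_id // projV_Z // addr0. Qed.

Lemma projZ_VZ v z : v \in Vs -> z \in Zs -> pZ (v + z) = z.
Proof. by move=> hv hz; rewrite linearD /= projZ_V // projZ_id // add0r. Qed.

Definition vaut (f : N -> N) x := pV (f (pV x)) + f (pZ x).

Lemma vaut_id : vaut id =1 id.
Proof. by move=> x; rewrite /vaut projV_id ?memv_pi // projVZ. Qed.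

Lemma vaut_eq f g : f =1 g -> vaut f =1 vaut g.
Proof. by move=> fg x; rewrite /vaut !fg. Qed.

Lemma vautM f g : lie_ring_aut b f -> lie_ring_aut b g ->
  vaut (g \o f) =1 vaut g \o vaut f.
Proof.
move=> hf hg x; have fZ := Zchar hf (memv_pi Zs Vs x).
rewrite /vaut /= projV_VZ ?memv_pi // projZ_VZ ?memv_pi //; congr (_ + _).
rewrite -{1}[f (pV x)]projVZ (lie_autD hg) linearD /=.
by rewrite [pV (g (pZ _))]projV_Z ?addr0 // Zchar ?memv_pi.
Qed.

Lemma vautK f g : lie_ring_aut b f -> lie_ring_aut b g -> cancel f g ->
  cancel (vaut f) (vaut g).
Proof.
move=> hf hg fK x; have /= <- := vautM hf hg x.
by rewrite (vaut_eq (f := g \o f) (g := id) fK) vaut_id.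
Qed.

Lemma lie_aut_sub_vaut f x : lie_ring_aut b f -> f x - vaut f x \in Zs.
Proof.
move=> hf; rewrite /vaut -{1}[x]projVZ (lie_autD hf) opprD addrACA subrr addr0.
by rewrite -{1}[f (pV x)]projVZ addrAC subrr add0r memv_pi.
Qed.

Lemma vaut_lie_aut f g : lie_ring_aut b f -> cancel f g ->
  lie_ring_aut b (vaut f).
Proof.
move=> hf fK; have [hg gK] := lie_aut_inv hf fK.
split=> [x y||x y].
- by rewrite /vaut !linearD /= !(lie_autD hf) linearD addrACA.
- by exists (vaut g); apply: vautK.
have kf u : vaut f u - f u \in Zs by rewrite -opprB memvN lie_aut_sub_vaut.
rewrite (central_bracket_eq hb Zcentral (kf x) (kf y)) -(lie_aut_bracket hf).
by rewrite /vaut (projV_Z (Zbrackets x y)) (lie_aut0 hf) linear0 add0r projZ_id.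
Qed.

Lemma vaut_memV f v : lie_ring_aut b f -> v \in Vs -> vaut f v \in Vs.
Proof. by move=> hf hv; rewrite /vaut projZ_V // (lie_aut0 hf) addr0 memv_pi. Qed.

Lemma vaut_maps_onto_self f g : lie_ring_aut b f -> cancel f g ->
  maps_onto_self (vaut f) Vs.
Proof.
move=> hf fK; have [hg gK] := lie_aut_inv hf fK.
split=> [v hv|w hw]; first exact: vaut_memV.
by exists (vaut g w); [exact: vaut_memV | exact: vautK].
Qed.

Lemma lie_aut_factorization f : lie_ring_aut b f ->
  exists h k, [/\ lie_ring_aut b h /\ (forall x, h x - x \in Zs),
                  lie_ring_aut b k /\ maps_onto_self k Vs & f =1 h \o k].
Proof.
move=> hf; have [g fK gK] : bijective f by case: hf.
have [hg _] := lie_aut_inv hf fK.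
exists (f \o vaut g), (vaut f); split.
- split=> [|x /=]; first exact/lie_aut_comp/(vaut_lie_aut hg gK).
  by rewrite -{2}[x](vautK hg hf gK) lie_aut_sub_vaut.
- by split; [exact: vaut_lie_aut fK | exact: vaut_maps_onto_self fK].
by move=> x /=; rewrite (vautK hf hg fK).
Qed.

Lemma trivial_mod_derived_stabilizer_id f :
  is_derived_algebra b Zs -> lie_ring_aut b f -> (forall x, f x - x \in Zs) ->
  maps_onto_self f Vs -> f =1 id.
Proof.
move=> hZ hf fZ [fV _] x.
have fixV v : v \in Vs -> f v = v.
  by move=> hv; apply/subr0_eq/memVZ_eq0; [rewrite memvB ?fV | apply: fZ].
have fixZ z : z \in Zs -> f z = z.
  move=> /hZ [n [xs [ys ->]]]; rewrite (lie_aut_sum hf).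
  apply: eq_bigr => i _; rewrite (lie_aut_bracket hf).
  exact: central_bracket_eq hb Zcentral (fZ _) (fZ _).
by rewrite -[x]projVZ (lie_autD hf) fixV ?fixZ ?memv_pi.
Qed.

End Decomposition.

End LieRingAut.

Theorem proposition7p1 (R : realType) (N : vectType R) (b : N -> N -> N)
    (Vs Zs : {vspace N}) :
  is_lie_bracket b -> two_step_nilpotent b ->
  (is_derived_algebra b Zs \/ is_center b Zs) ->
  (Vs + Zs)%VS = fullv -> (Vs :&: Zs)%VS = 0%VS ->
  let G := fun f : N -> N => lie_ring_aut b f in
  let H := fun f : N -> N => G f /\ (forall x, f x - x \in Zs) in
  let K := fun f : N -> N => G f /\ maps_onto_self f Vs in
  [/\ normal_subgroup_of G H,
      subgroup_of G K,
      (forall f, G f -> exists h k, [/\ H h, K k & f =1 h \o k]) &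
      (is_derived_algebra b Zs -> forall f, H f -> K f -> f =1 id)].
Proof.
move=> hb [hnil _] hZ VZfull VZcap G H K.
have [Zcentral Zbrackets Zchar] :
    [/\ central_subspace b Zs, contains_brackets b Zs & characteristic b Zs].
  case: hZ => hZ.
    split; [exact: derived_algebra_central | exact: derived_algebra_brackets |
            exact: derived_algebra_characteristic].
  split; [exact: center_central | exact: center_brackets |
          exact: center_characteristic].
split.
- exact: trivial_mod_normal_subgroup.
- exact: stabilizer_subgroup.
- exact: lie_aut_factorization.
- move=> hd f [hf fZ] [_ fV].
  exact: (trivial_mod_derived_stabilizer_id hb Zcentral VZfull VZcap).
Qed.
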